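(* Let $R$ be a commutative ring, let $\mathfrak{m}_1,\ldots,\mathfrak{m}_d$ be finitely many distinct maximal ideals of $R$, let $c_1,\ldots,c_d\geq 1$ be integers and $I=\bigcap_{i=1}^d \mathfrak{m}_i^{c_i}$. Then $R/I$ is a GPP-ring.
   Context: A commutative ring $A$ is a GPP-ring (generalized p.p. ring) if for each $f\in A$ there exists an integer $n\geq 1$ such that the ideal $Af^n$ is a projective $A$-module. *)

From mathcomp Require Import all_boot all_algebra.
Set Implicit Arguments. Unset Strict Implicit. Unset Printing Implicit Defensive.
Import GRing.Theory.
Local Open Scope ring_scope.

Definition is_ideal (R : comPzRingType) (I : R -> Prop) : Prop :=
  [/\ I 0, (forall x y, I x -> I y -> I (x + y)) & (forall a x, I x -> I (a * x))].

Definition maximal_ideal (R : comPzRingType) (m : R -> Prop) : Prop :=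
  [/\ is_ideal m, ~ m 1 &
      forall J : R -> Prop, is_ideal J -> (forall x, m x -> J x) ->
        J 1 \/ (forall x, J x -> m x)].

Definition ideal_mul (R : comPzRingType) (I J : R -> Prop) : R -> Prop :=
  fun x => exists s : seq (R * R),
    (forall p, p \in s -> I p.1 /\ J p.2) /\ x = \sum_(p <- s) p.1 * p.2.

Fixpoint ideal_pow (R : comPzRingType) (I : R -> Prop) (c : nat) : R -> Prop :=
  match c with
  | 0 => fun _ => True
  | c'.+1 => ideal_mul (ideal_pow I c') I
  end.

(* A map h : A -> N that is A-linear on the subset P (values outside P are
   irrelevant): this represents an A-linear map P -> N on the submodule P. *)
Definition linear_on (A : comPzRingType) (N : lmodType A)
    (P : A -> Prop) (h : A -> N) : Prop :=
  (forall x y, P x -> P y -> h (x + y) = h x + h y) /\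
  (forall (a x : A), P x -> h (a * x) = a *: h x).

Definition projective_submodule (A : comPzRingType) (P : A -> Prop) : Prop :=
  forall (M N : lmodType A) (g : {linear M -> N}) (h : A -> N),
    (forall y : N, exists x : M, g x = y) ->
    linear_on P h ->
    exists k : A -> M, linear_on P k /\ (forall x, P x -> g (k x) = h x).

Definition principal_ideal (A : comPzRingType) (f : A) : A -> Prop :=
  fun x => exists a : A, x = a * f.

Definition GPP_ring (A : comPzRingType) : Prop :=
  forall f : A, exists n : nat, (1 <= n)%N /\
    projective_submodule (principal_ideal (f ^+ n)).

From mathcomp Require Import all_boot all_algebra.
From mathcomp Require Import ring.
From Stdlib Require Import Classical.
Set Implicit Arguments. Unset Strict Implicit. Unset Printing Implicit Defensive.
Import GRing.Theory.
Local Open Scope ring_scope.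

(* For f = phi r it suffices to find n >= 1 and a with f^n = a f^(2n): then
   e = a f^n is idempotent and A f^n = A e is a direct summand of A, hence
   projective.  Modulo m_i^(c_i), either r lies in m_i, so r^n vanishes for
   n >= c_i, or r is a unit, being one modulo m_i; a single t with
   1 - r t in m_i^(c_i) for all the second kind of indices is obtained as a
   product.  Then r^n - t^n r^(2n) = r^n (1 - (r t)^n) lies in every
   m_i^(c_i). *)

Section Ideals.
Variable R : comPzRingType.
Implicit Types (I J m : R -> Prop) (a r x : R).

Lemma idealMl I a x : is_ideal I -> I x -> I (a * x).
Proof. by case=> _ _; apply. Qed.

Lemma idealMr I a x : is_ideal I -> I x -> I (x * a).
Proof. by rewrite mulrC; apply: idealMl. Qed.

Lemma is_ideal_mul I J : is_ideal I -> is_ideal (ideal_mul I J).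
Proof.
case=> _ _ IM; split.
- by exists [::]; rewrite big_nil.
- move=> _ _ [s [Hs ->]] [t [Ht ->]]; exists (s ++ t); rewrite big_cat.
  by split=> // p; rewrite mem_cat => /orP[/Hs | /Ht].
- move=> a _ [s [Hs ->]]; exists [seq (a * p.1, p.2) | p <- s]; split.
  + by move=> _ /mapP[p /Hs[Ip Jp] ->]; split=> //; apply: IM.
  + by rewrite big_map mulr_sumr; apply: eq_bigr => p _; rewrite mulrA.
Qed.

Lemma is_ideal_pow I c : is_ideal I -> is_ideal (ideal_pow I c).
Proof. by move=> HI; elim: c => [|c IH] /=; [split | apply: is_ideal_mul]. Qed.

Lemma ideal_pow_expr I c x : I x -> ideal_pow I c (x ^+ c).
Proof.
move=> Ix; elim: c => [|c IH] //=; exists [:: (x ^+ c, x)].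
by rewrite big_seq1 exprSr; split=> // p; rewrite inE => /eqP ->.
Qed.

Lemma subr1X x n : 1 - x ^+ n = (1 - x) * \sum_(i < n) x ^+ i.
Proof. by rewrite -opprB subrX1 -mulNr opprB. Qed.

Lemma maximal_ideal_inv_mod m r :
  maximal_ideal m -> ~ m r -> exists s, m (1 - s * r).
Proof.
case=> -[m0 mD mM] _ m_max m'r.
pose J x := exists y a, m y /\ x = y + a * r.
have J_ideal : is_ideal J.
  split; first by exists 0, 0; rewrite mul0r addr0.
  - move=> _ _ [y1 [a1 [my1 ->]]] [y2 [a2 [my2 ->]]].
    by exists (y1 + y2), (a1 + a2); split; [apply: mD | ring].
  - move=> a _ [y [b [my ->]]].
    by exists (a * y), (a * b); split; [apply: mM | ring].
have mJ x : m x -> J x by exists x, 0; rewrite mul0r addr0.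
case: (m_max J J_ideal mJ) => [[y [s [my ys1]]] | Jm].
  by exists s; rewrite ys1 addrK.
by case: m'r; apply: Jm; exists 0, 1; rewrite mul1r add0r.
Qed.

Lemma maximal_ideal_pow_inv_mod m c r :
  maximal_ideal m -> ~ m r -> exists q, ideal_pow m c (1 - r * q).
Proof.
move=> m_max m'r; have [s ms] := maximal_ideal_inv_mod m_max m'r.
exists (s * \sum_(i < c) (1 - s * r) ^+ i).
have -> : 1 - r * (s * \sum_(i < c) (1 - s * r) ^+ i) = (1 - s * r) ^+ c.
  by rewrite -[RHS](subKr 1) subr1X; ring.
exact: ideal_pow_expr.
Qed.

End Ideals.

Section PowersOfMaximalIdeals.
Variables (R : comPzRingType) (T : finType) (m : T -> R -> Prop) (c : T -> nat).
Hypothesis m_max : forall i, maximal_ideal (m i).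

Lemma common_inv_mod_pow_maximals r :
  exists t, forall i, m i r \/ ideal_pow (m i) (c i) (1 - r * t).
Proof.
have mc_ideal i : is_ideal (ideal_pow (m i) (c i)).
  by apply: is_ideal_pow; case: (m_max i).
suff [t Ht] : exists t, forall i, i \in enum T ->
    m i r \/ ideal_pow (m i) (c i) (1 - r * t).
  by exists t => i; apply: Ht; rewrite mem_enum.
elim: (enum T) => [|i s [t Ht]]; first by exists 0.
have [mir | m'ir] := classic (m i r).
  by exists t => j; rewrite inE => /orP[/eqP -> | /Ht]; [left |].
have [q mcq] := maximal_ideal_pow_inv_mod (c i) (m_max i) m'ir.
exists (t + q - r * t * q) => j.
have -> : 1 - r * (t + q - r * t * q) = (1 - r * t) * (1 - r * q) by ring.
rewrite inE => /orP[/eqP -> | /Ht[mjr | mct]]; first by right; apply: idealMl.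
- by left.
- by right; apply: idealMr.
Qed.

Lemma regular_mod_pow_maximals r :
  exists n a, (1 <= n)%N /\
    forall i, ideal_pow (m i) (c i) (r ^+ n - a * (r ^+ n * r ^+ n)).
Proof.
have [t Ht] := common_inv_mod_pow_maximals r.
set n := (\max_i c i).+1.
exists n, (t ^+ n); split=> // i.
have mc_ideal : is_ideal (ideal_pow (m i) (c i)).
  by apply: is_ideal_pow; case: (m_max i).
have -> : r ^+ n - t ^+ n * (r ^+ n * r ^+ n) = r ^+ n * (1 - (r * t) ^+ n).
  by rewrite exprMn; ring.
case: (Ht i) => [mir | mct].
  have cn : (c i <= n)%N by apply/leqW/leq_bigmax.
  rewrite -[X in r ^+ X](subnK cn) exprD mulrAC.
  exact/(idealMl _ mc_ideal)/ideal_pow_expr.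
by rewrite subr1X mulrCA; apply: idealMr mc_ideal mct.
Qed.

End PowersOfMaximalIdeals.

Lemma regular_principal_ideal_projective (A : comPzRingType) (g b : A) :
  b * (g * g) = g -> projective_submodule (principal_ideal g).
Proof.
move=> bgg M N p h p_onto [_ hZ].
have [u hu] := p_onto (h (b * g)).
exists (fun x => x *: u); split; first split.
- by move=> x y _ _; apply: scalerDl.
- by move=> a x _; rewrite scalerA.
- move=> _ [a ->]; rewrite linearZ /= hu -hZ; last by exists b.
  by congr h; rewrite -[in RHS]bgg; ring.
Qed.

Theorem proposition2p6 (R : comPzRingType) (d : nat)
    (m : 'I_d -> R -> Prop) (c : 'I_d -> nat)
    (hmax : forall i, maximal_ideal (m i))
    (hdist : forall i j, i != j -> ~ (forall x, m i x <-> m j x))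
    (hc : forall i, (1 <= c i)%N)
    (S : comPzRingType) (phi : {rmorphism R -> S})
    (hsurj : forall y : S, exists x : R, phi x = y)
    (hker : forall x : R, phi x = 0 <-> (forall i, ideal_pow (m i) (c i) x)) :
  GPP_ring S.
Proof.
move=> f; have [r <-] := hsurj f.
have [n [a [n_gt0 /hker]]] := regular_mod_pow_maximals c hmax r.
rewrite rmorphB !rmorphM rmorphXn => /eqP; rewrite subr_eq0 => /eqP fn_reg.
by exists n; split=> //; apply: (regular_principal_ideal_projective (esym fn_reg)).
Qed.
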